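(* Let $z_1,\dots,z_k\in\mathbb{C}\setminus\{1\}$. Then: (a) The function $\vec n\mapsto\Psi^{\ell}_{\vec z}(\vec n)$ on $\mathbb{Z}^k$ satisfies $(1-q)\sum_{i=1}^k\nabla^{\mathrm{bwd}}_i\Psi^\ell_{\vec z}=(q-1)(z_1+\cdots+z_k)\Psi^\ell_{\vec z}$ on $\mathbb{Z}^k$ and the backward boundary conditions $\big((\nabla^{\mathrm{bwd}}_i-q\nabla^{\mathrm{bwd}}_{i+1})\Psi^\ell_{\vec z}\big)(\vec n)=0$ whenever $n_i=n_{i+1}$, $1\le i\le k-1$. Consequently, on $\mathbb{W}^k$, $\mathcal{H}^{\mathrm{bwd}}\Psi^\ell_{\vec z}=(q-1)(z_1+\cdots+z_k)\Psi^\ell_{\vec z}$. (b) The function $\Psi^{\mathrm{cfwd}}_{\vec z}(\vec n)=\sum_{\sigma\in S_k}\prod_{1\le B<A\le k}\frac{z_{\sigma(A)}-q^{-1}z_{\sigma(B)}}{z_{\sigma(A)}-z_{\sigma(B)}}\prod_{j=1}^k(1-z_{\sigma(j)})^{n_j}$ on $\mathbb{Z}^k$ satisfies $(1-q)\sum_{i}\nabla^{\mathrm{fwd}}_i\Psi^{\mathrm{cfwd}}_{\vec z}=(q-1)(z_1+\cdots+z_k)\Psi^{\mathrm{cfwd}}_{\vec z}$ and the forward boundary conditions $\big((q\nabla^{\mathrm{fwd}}_i-\nabla^{\mathrm{fwd}}_{i+1})\Psi^{\mathrm{cfwd}}_{\vec z}\big)(\vec n)=0$ whenever $n_i=n_{i+1}$.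 Consequently, on $\mathbb{W}^k$, $\mathcal{H}^{\mathrm{cfwd}}\Psi^{\mathrm{cfwd}}_{\vec z}=(q-1)(\sum_j z_j)\Psi^{\mathrm{cfwd}}_{\vec z}$ and $\mathcal{H}^{\mathrm{fwd}}\Psi^{r}_{\vec z}=(q-1)(\sum_j z_j)\Psi^{r}_{\vec z}$, where $\Psi^r_{\vec z}=C_q^{-1}\Psi^{\mathrm{cfwd}}_{\vec z}$.
   Context: Fix $q\in(0,1)$ and integer $k\ge1$. $\mathbb{W}^k=\{\vec n\in\mathbb{Z}^k:n_1\ge\cdots\ge n_k\}$; $\vec n_i^\pm$ changes the $i$-th coordinate by $\pm1$; $(\nabla^{\mathrm{bwd}}_iu)(\vec n)=u(\vec n_i^-)-u(\vec n)$, $(\nabla^{\mathrm{fwd}}_iu)(\vec n)=u(\vec n_i^+)-u(\vec n)$. For $\vec n\in\mathbb{W}^k$ with $M$ clusters of sizes $c_1,\dots,c_M$ (so $n_1=\cdots=n_{c_1}>n_{c_1+1}=\cdots$) and gaps $g_1=+\infty$, $g_i$ = (value of cluster $i-1$) $-$ (value of cluster $i$): $(c)!_q=\prod_{j=1}^c\frac{1-q^j}{1-q}$, $C_q(\vec n)=(-1)^kq^{-k(k-1)/2}\prod_i(c_i)!_q$; $(\mathcal{H}^{\mathrm{bwd}}f)(\vec n)=\sum_{i=1}^{M}(1-q^{c_i})\big(f(\vec n^{-}_{c_1+\cdots+c_i})-f(\vec n)\big)$; $(\mathcal{H}^{\mathrm{fwd}}f)(\vec n)=\sum_{i=1}^{M}\Big(\big((1-q^{c_{i-1}+1})\mathbf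 1_{g_i=1}+(1-q)\mathbf 1_{g_i>1}\big)f(\vec n^{+}_{c_1+\cdots+c_{i-1}+1})-(1-q^{c_i})f(\vec n)\Big)$ (index $1$ when $i=1$); $\mathcal{H}^{\mathrm{cfwd}}=C_q\mathcal{H}^{\mathrm{fwd}}C_q^{-1}$, i.e. $(\mathcal{H}^{\mathrm{cfwd}}f)(\vec n)=\sum_{i=1}^M(1-q^{c_i})(f(\vec n^+_{c_1+\cdots+c_{i-1}+1})-f(\vec n))$. $\Psi^{\ell}_{\vec z}(\vec n)=\sum_{\sigma\in S_k}\prod_{1\le B<A\le k}\frac{z_{\sigma(A)}-qz_{\sigma(B)}}{z_{\sigma(A)}-z_{\sigma(B)}}\prod_{j=1}^k(1-z_{\sigma(j)})^{-n_j}$. For fixed $\vec n$ these symmetrized expressions are symmetric Laurent polynomials in $1-z_1,\dots,1-z_k$ and are understood as such (so no distinctness of the $z_i$ is needed). *)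

From HB Require Import structures.
From mathcomp Require Import all_boot all_order all_algebra all_fingroup.
Set Implicit Arguments. Unset Strict Implicit. Unset Printing Implicit Defensive.
Import Order.TTheory GRing.Theory Num.Theory.
Local Open Scope ring_scope.

(* Points of Z^k are functions 'I_k -> int; coordinate i (0-based) is n i.
   Coordinate 1 of the paper is index 0 here. *)

Section Defs.
Variable R : numClosedFieldType.
Variable k : nat.
Implicit Types (q a : R) (z : 'I_k -> R) (n : 'I_k -> int).

Definition shift n (i : 'I_k) (d : int) : 'I_k -> int :=
  fun j => if j == i then n j + d else n j.

Definition nabla_bwd (i : 'I_k) (f : ('I_k -> int) -> R) n : R :=
  f (shift n i (-1)) - f n.
Definition nabla_fwd (i : 'I_k) (f : ('I_k -> int) -> R) n : R :=
  f (shift n i 1) - f n.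

Definition weyl n : Prop := forall i j : 'I_k, (i <= j)%N -> n j <= n i.

(* the value of coordinate l (a nat index), 0 if out of range *)
Definition nat_val n (l : nat) : int := odflt 0 (omap n (insub l : option 'I_k)).

(* For n in W^k, clusters are maximal blocks of consecutive equal coordinates.
   j is the last (resp. first) index of its cluster: *)
Definition is_last n (j : 'I_k) : bool :=
  ~~ (j.+1 < k)%N || (nat_val n j.+1 != n j).
Definition is_first n (j : 'I_k) : bool :=
  (val j == 0)%N || (nat_val n j.-1 != n j).
Definition csize_at n (l : nat) : nat := #|[pred i : 'I_k | n i == nat_val n l]|.

Definition qfact q (c : nat) : R := \prod_(1 <= j < c.+1) ((1 - q ^+ j) / (1 - q)).

Definition Cq q n : R :=
  (-1) ^+ k * (q ^+ ((k * (k - 1)) %/ 2))^-1 *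
  \prod_(j : 'I_k | is_last n j) qfact q (csize_at n j).

Definition Hbwd q (f : ('I_k -> int) -> R) n : R :=
  \sum_(j : 'I_k | is_last n j) (1 - q ^+ csize_at n j) * (f (shift n j (-1)) - f n).

(* coefficient in H^fwd for the cluster whose first index is j:
   g = +oo for the first cluster; otherwise g = n_{j-1} - n_j and c_{i-1} is the
   size of the cluster of index j-1 *)
Definition fwd_coef q n (j : 'I_k) : R :=
  if (val j == 0)%N then 1 - q
  else if nat_val n j.-1 - n j == 1 then 1 - q ^+ (csize_at n j.-1).+1
  else 1 - q.

Definition Hfwd q (f : ('I_k -> int) -> R) n : R :=
  \sum_(j : 'I_k | is_first n j)
     (fwd_coef q n j * f (shift n j 1) - (1 - q ^+ csize_at n j) * f n).

Definition Hcfwd q (f : ('I_k -> int) -> R) n : R :=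
  Cq q n * Hfwd q (fun m => f m / Cq q m) n.

(* ---- The symmetrized functions ----
   sym a e z n = sum_{sigma in S_k} prod_{B<A} (z_{s A} - a z_{s B})/(z_{s A} - z_{s B})
                  * prod_j (1 - z_{s j})^{e n_j}
   understood as the value at z of the symmetric Laurent polynomial in the 1 - z_i
   (no distinctness of the z_i needed).  Concretely: multiply by
   W^m := prod_j (1-z_j)^m (m = sum_j |n_j|), which makes it a polynomial in z;
   restrict to the line z(t) = z + t (0,1,...,k-1), on which it equals P(t)/D(t)
   with P(t) = sum_s sgn(s) prod_{B<A}(z_{sA}(t) - a z_{sB}(t)) prod_j (1-z_{sj}(t))^{m + e n_j}
   and D(t) = prod_{B<A}(z_A(t) - z_B(t)) (a nonzero polynomial, dividing P);
   evaluate the polynomial quotient at t = 0 and divide by W^m. *)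
Definition Zt z (j : 'I_k) : {poly R} := (z j)%:P + (j%:R) *: 'X.
Definition Wt z (j : 'I_k) : {poly R} := 1 - Zt z j.
Definition mexp n : nat := \sum_(j : 'I_k) absz (n j).

Definition sym_num a (e : int) z n : {poly R} :=
  \sum_(s : 'S_k) (-1) ^+ odd_perm s *
     (\prod_(A : 'I_k) \prod_(B : 'I_k | (B < A)%N) (Zt z (s A) - a *: Zt z (s B))) *
     \prod_(j : 'I_k) Wt z (s j) ^+ absz ((mexp n)%:Z + e * n j).

Definition sym_den z : {poly R} :=
  \prod_(A : 'I_k) \prod_(B : 'I_k | (B < A)%N) (Zt z A - Zt z B).

Definition sym a (e : int) z n : R :=
  ((sym_num a e z n) %/ (sym_den z)).[0] / \prod_(j : 'I_k) (1 - z j) ^+ mexp n.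

Definition Psi_l q z n : R := sym q (-1) z n.
Definition Psi_cfwd q z n : R := sym q^-1 1 z n.
Definition Psi_r q z n : R := Psi_cfwd q z n / Cq q n.

End Defs.

From HB Require Import structures.
From mathcomp Require Import all_boot all_order all_algebra all_fingroup.
From mathcomp Require Import zify ring.
Import Order.TTheory GRing.Theory Num.Theory.
Local Open Scope ring_scope.
Set Implicit Arguments. Unset Strict Implicit. Unset Printing Implicit Defensive.

(* By definition Psi = sym a e z n = (N %/ D).[0] / W^m, where N is an alternating
   sum over S_k evaluated along perturbed points Zt and D is their Vandermonde.
   1. Alternants: sum_s sgn s prod_j f_j(x_(s j)) is the Vandermonde of x times a
      determinant.  Expanding each factor x_(sA) - a x_(sB) of N shows N = D * Q
      with Q explicit, so Psi = Q.[0] / W^m exactly.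
   2. Padding all exponents by d multiplies Q by (prod_j W_j)^d, so Psi may be
      computed with any large enough padding; n and its neighbours n +/- e_i are
      then compared with one common padding.
   3. Raising the i-th exponent multiplies the s-term of N by W_(s i): summing
      over i gives the free equation, and the antisymmetry under the adjacent
      transposition (i i+1) gives the boundary relation.
   4. On W^k a sum over cluster ends telescopes, thanks to the boundary relation,
      into (1 - q) times a full sum; and C_q transforms under the move of a
      cluster head exactly by the coefficients of H^fwd.
   The theorem combines 3 and 4 with (a, e) = (q, -1) and (q^-1, 1). *)

Section Alternant.
Variable S : comNzRingType.
Variable k : nat.

Definition vand (x : 'I_k -> S) : S :=
  \prod_(A : 'I_k) \prod_(B : 'I_k | (B < A)%N) (x A - x B).

(* The coefficients of f reduced modulo prod_l ('X - x_l), a polynomial of degree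
   < k that agrees with f at every x_l. *)
Definition alt_rem (x : 'I_k -> S) (f : {poly S}) (l : 'I_k) : S :=
  (Pdiv.Ring.rmodp f (\prod_(l < k) ('X - (x l)%:P)))`_l.

Lemma horner_alt_rem (x : 'I_k -> S) (f : {poly S}) (i : 'I_k) :
  f.[x i] = \sum_(l < k) alt_rem x f l * x i ^+ l.
Proof.
rewrite /alt_rem; set P := \prod_(l < k) ('X - (x l)%:P).
have mP : P \is monic by apply: monic_prod_XsubC.
have sP : size P = k.+1 by rewrite /P -big_enum /= size_prod_XsubC size_enum_ord.
set r := Pdiv.Ring.rmodp f P.
have sr : (size r <= k)%N by have := Pdiv.Ring.ltn_rmodpN0 f (monic_neq0 mP); rewrite sP.
have Pxi : P.[x i] = 0 by rewrite horner_prod (bigD1 i) //= hornerXsubC subrr mul0r.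
rewrite {1}(Pdiv.RingMonic.rdivp_eq mP f) hornerD hornerM Pxi mulr0 add0r.
by rewrite (horner_coef_wide _ sr).
Qed.

Definition alt_det (x : 'I_k -> S) (f : 'I_k -> {poly S}) : S :=
  \det (\matrix_(j, l) alt_rem x (f j) l).

(* Alternant factorization: an alternating sum of products of polynomial values
   is divisible by the Vandermonde product (via det (C * Vandermonde)). *)
Lemma alternant_factor (x : 'I_k -> S) (f : 'I_k -> {poly S}) :
  \sum_(s : 'S_k) (-1) ^+ odd_perm s * \prod_(j : 'I_k) (f j).[x (s j)]
  = vand x * alt_det x f.
Proof.
rewrite /alt_det; set C := \matrix_(j, l) alt_rem x (f j) l.
have -> : \sum_(s : 'S_k) (-1) ^+ odd_perm s * \prod_(j : 'I_k) (f j).[x (s j)]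
    = \det (C *m Vandermonde k (\row_i x i)).
  rewrite [RHS]/determinant; apply: eq_bigr => s _; congr (_ * _).
  apply: eq_bigr => j _; rewrite !mxE horner_alt_rem.
  by apply: eq_bigr => l _; rewrite !mxE.
rewrite det_mulmx det_Vandermonde mulrC; congr (_ * _).
rewrite /vand pair_big_dep /= pair_big_dep /=.
rewrite (reindex (fun p : 'I_k * 'I_k => (p.2, p.1))) /=; last first.
  by exists (fun p : 'I_k * 'I_k => (p.2, p.1)) => [[]|[]].
by apply: eq_bigr => p _; rewrite !mxE.
Qed.

Lemma alternant_factor_prod (x : 'I_k -> S) (I : finType) (iota : I -> 'I_k)
    (h : I -> {poly S}) (g : 'I_k -> {poly S}) :
  \sum_(s : 'S_k) (-1) ^+ odd_perm s *
     (\prod_(p : I) (h p).[x (s (iota p))] * \prod_(j : 'I_k) (g j).[x (s j)])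
  = vand x * alt_det x (fun j => (\prod_(p | iota p == j) h p) * g j).
Proof.
rewrite -alternant_factor; apply: eq_bigr => s _; congr (_ * _).
rewrite (partition_big iota xpredT) //= -big_split /=.
apply: eq_bigr => j _; rewrite hornerM horner_prod; congr (_ * _).
by apply: eq_bigr => p /eqP ->.
Qed.

End Alternant.

Section SymmetrizedValue.
Variable R : numClosedFieldType.
Variable k : nat.
Implicit Types (a : R) (e : int) (z : 'I_k -> R) (n : 'I_k -> int) (ex : 'I_k -> nat).

Definition cross a z (s : 'S_k) : {poly R} :=
  \prod_(A : 'I_k) \prod_(B : 'I_k | (B < A)%N) (Zt z (s A) - a *: Zt z (s B)).
Definition weight z ex (s : 'S_k) : {poly R} := \prod_(j : 'I_k) Wt z (s j) ^+ ex j.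

Definition alt_num a z ex : {poly R} :=
  \sum_(s : 'S_k) (-1) ^+ odd_perm s * cross a z s * weight z ex s.

(* Expanding each factor x_A - a x_B of the cross product chooses, for every
   pair p = (A, B) with B < A, the point A (factor 'X) or the point B
   (factor -a 'X); the other pairs contribute the constant 1. *)
Definition chosen (eps : {ffun 'I_k * 'I_k -> bool}) (p : 'I_k * 'I_k) : 'I_k :=
  if eps p then p.1 else p.2.
Definition chosen_factor a (eps : {ffun 'I_k * 'I_k -> bool}) (p : 'I_k * 'I_k)
    : {poly {poly R}} :=
  if (p.2 < p.1)%N then (if eps p then 'X else - (a%:P)%:P * 'X)
  else (if eps p then 1 else 0).

Definition alt_quot a z ex : {poly R} :=
  \sum_(eps : {ffun 'I_k * 'I_k -> bool})
     alt_det (Zt z) (fun j => (\prod_(p | chosen eps p == j) chosen_factor a eps p)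
                              * (1 - 'X) ^+ ex j).

Lemma alt_num_factor a z ex : alt_num a z ex = sym_den z * alt_quot a z ex.
Proof.
rewrite /alt_quot mulr_sumr.
have -> : sym_den z = vand (Zt z) by [].
under [RHS]eq_bigr => eps _ do rewrite -(alternant_factor_prod (Zt z) (chosen eps)
   (chosen_factor a eps) (fun j => (1 - 'X) ^+ ex j)).
rewrite exchange_big /= /alt_num; apply: eq_bigr => s _.
rewrite -mulrA -mulr_sumr -mulr_suml; congr (_ * (_ * _)); last first.
  by apply: eq_bigr => j _; rewrite horner_exp hornerD hornerN hornerX hornerC.
rewrite /cross pair_big_dep /= big_mkcond /=.
rewrite (eq_bigr (fun p : 'I_k * 'I_k => \sum_(b : bool)
   (if (p.2 < p.1)%N then (if b then 'X else - (a%:P)%:P * 'X)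
    else (if b then 1 else 0)).[Zt z (s (if b then p.1 else p.2))])); last first.
  move=> p _; rewrite big_bool /=.
  case: ifP => _; last by rewrite hornerC hornerC addr0.
  by rewrite hornerX hornerM hornerN !hornerC hornerX mulNr mul_polyC.
rewrite bigA_distr_bigA /=; apply: eq_bigr => eps _.
by apply: eq_bigr => p _; rewrite /chosen_factor /chosen.
Qed.

Lemma Zt_sub_neq0 z (A B : 'I_k) : (B < A)%N -> Zt z A - Zt z B != 0.
Proof.
move=> hBA; apply/eqP => /(congr1 (fun p : {poly R} => p`_1)).
rewrite /Zt coefB !coefD !coefC !coefZ coefX /= !mulr1 !add0r.
move/eqP; rewrite subr_eq0 eqr_nat => /eqP hAB; move: hBA; by rewrite hAB ltnn.
Qed.

Lemma sym_den_neq0 z : sym_den z != 0.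
Proof. by apply/prodf_neq0 => A _; apply/prodf_neq0 => B hB; apply: Zt_sub_neq0. Qed.

Lemma alt_quot_ext a z ex1 ex2 : (forall j, ex1 j = ex2 j) ->
  alt_quot a z ex1 = alt_quot a z ex2.
Proof.
move=> e12; apply: (mulfI (sym_den_neq0 z)); rewrite -!alt_num_factor.
by apply: eq_bigr => s _; congr (_ * _); apply: eq_bigr => j _; rewrite e12.
Qed.

(* Exponent of W_j when sym a e z n is computed with padding M, and the
   condition that no exponent was truncated. *)
Definition pad e n (M : nat) (j : 'I_k) : nat := absz (M%:Z + e * n j).
Definition pad_ok e n (M : nat) := forall j, 0 <= M%:Z + e * n j.

Definition wpow z (M : nat) : R := \prod_(j : 'I_k) (1 - z j) ^+ M.
Definition sym_pad a e z n (M : nat) : R := (alt_quot a z (pad e n M)).[0] / wpow z M.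

(* sym is the padded value with padding mexp n, since the division is exact. *)
Lemma sym_sym_pad a e z n : sym a e z n = sym_pad a e z n (mexp n).
Proof.
rewrite /sym /sym_pad /wpow; congr (_.[0] / _).
have -> : sym_num a e z n = alt_num a z (pad e n (mexp n)) by [].
by rewrite alt_num_factor mulKp ?sym_den_neq0.
Qed.

Lemma prod_perm (T : comNzRingType) (s : 'S_k) (F : 'I_k -> T) :
  \prod_(j : 'I_k) F (s j) = \prod_(j : 'I_k) F j.
Proof. by rewrite [RHS](reindex_inj (@perm_inj _ s)). Qed.

Lemma alt_quot_padD a z ex (d : nat) :
  alt_quot a z (fun j => (ex j + d)%N) = alt_quot a z ex * (\prod_(j : 'I_k) Wt z j) ^+ d.
Proof.
apply: (mulfI (sym_den_neq0 z)); rewrite mulrA -!alt_num_factor /alt_num mulr_suml.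
apply: eq_bigr => s _; rewrite -!mulrA; congr (_ * (_ * _)).
rewrite /weight; under eq_bigr => j _ do rewrite exprD.
by rewrite big_split /= prodrXl (prod_perm s (Wt z)).
Qed.

Lemma pad_add e n M d j : pad_ok e n M -> pad e n (M + d) j = (pad e n M j + d)%N.
Proof.
move=> hM; rewrite /pad PoszD addrAC.
by move: (hM j); case: (M%:Z + e * n j).
Qed.

Lemma Wt0 z j : (Wt z j).[0] = 1 - z j.
Proof. by rewrite /Wt /Zt !hornerE. Qed.

Lemma prod_1subz_neq0 z : (forall j, z j != 1) -> \prod_(j : 'I_k) (1 - z j) != 0.
Proof. by move=> hz; apply/prodf_neq0 => j _; rewrite subr_eq0 eq_sym. Qed.

Lemma wpow_neq0 z M : (forall j, z j != 1) -> wpow z M != 0.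
Proof. by move=> hz; rewrite /wpow prodrXl expf_neq0 ?prod_1subz_neq0. Qed.

Lemma sym_pad_add a e z n M d : (forall j, z j != 1) -> pad_ok e n M ->
  sym_pad a e z n (M + d) = sym_pad a e z n M.
Proof.
move=> hz hM; rewrite /sym_pad (alt_quot_ext _ _ (fun j => pad_add d j hM)).
rewrite alt_quot_padD hornerM horner_exp horner_prod.
under eq_bigr => j _ do rewrite Wt0.
have hW : wpow z (M + d) = wpow z M * (\prod_j (1 - z j)) ^+ d.
  by rewrite /wpow -prodrXl -big_split /=; apply: eq_bigr => j _; rewrite exprD.
have hP := expf_neq0 d (prod_1subz_neq0 hz).
by rewrite hW; field; rewrite hP wpow_neq0.
Qed.

Lemma sym_pad_indep a e z n M1 M2 : (forall j, z j != 1) ->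
  pad_ok e n M1 -> pad_ok e n M2 -> sym_pad a e z n M1 = sym_pad a e z n M2.
Proof.
move=> hz; wlog h12 : M1 M2 / (M1 <= M2)%N.
  move=> W h1 h2; case: (leqP M1 M2) => h; first exact: W.
  by symmetry; apply: W => //; apply: ltnW.
by move=> h1 h2; rewrite -(subnKC h12) sym_pad_add.
Qed.

Lemma pad_ok_mexp e n M : absz e = 1%N -> (mexp n <= M)%N -> pad_ok e n M.
Proof.
move=> he hM j.
have hj : (absz (n j) <= mexp n)%N by rewrite /mexp (bigD1 j) //= leq_addr.
have : (absz (e * n j)%R <= M)%N by rewrite abszM he mul1n (leq_trans hj).
set x := e * n j => hx.
have h2 : - x <= (absz x)%:Z by rewrite -abszN; apply: lez_abs.
have h3 : (absz x)%:Z <= M%:Z by rewrite lez_nat.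
lia.
Qed.

Lemma unit_sq e : absz e = 1%N -> e * e = 1.
Proof. by case: e => [[|[|]]|[|]]. Qed.

Lemma pad_shift e n i M j : absz e = 1%N -> pad_ok e n M ->
  pad e (shift n i e) M j = (pad e n M j + (j == i))%N.
Proof.
move=> he hM; rewrite /pad /shift.
case: eqP => _; last by rewrite addn0.
rewrite mulrDr unit_sq // addrA; move: (hM j).
by case: (M%:Z + e * n j) => //= m _; rewrite addn1.
Qed.

Lemma pad_ok_shift e n i M : absz e = 1%N -> pad_ok e n M -> pad_ok e (shift n i e) M.
Proof.
move=> he hM j; rewrite /shift; case: eqP => _ //.
by rewrite mulrDr unit_sq // addrA; have := hM j; lia.
Qed.

Lemma sym_common_pad a e z n : (forall j, z j != 1) -> absz e = 1%N ->
  sym a e z n = (alt_quot a z (pad e n (mexp n).+1)).[0] / wpow z (mexp n).+1.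
Proof.
move=> hz he.
by rewrite sym_sym_pad (sym_pad_indep a hz (pad_ok_mexp he (leqnn _))
  (pad_ok_mexp he (leqnSn _))).
Qed.

Lemma sym_shift_common_pad a e z n i : (forall j, z j != 1) -> absz e = 1%N ->
  sym a e z (shift n i e) =
  (alt_quot a z (fun j => (pad e n (mexp n).+1 j + (j == i))%N)).[0]
    / wpow z (mexp n).+1.
Proof.
move=> hz he; have hM : pad_ok e n (mexp n).+1 by apply: pad_ok_mexp.
rewrite sym_sym_pad (sym_pad_indep a hz (pad_ok_mexp he (leqnn _))
  (pad_ok_shift i he hM)).
by rewrite /sym_pad (alt_quot_ext _ _ (fun j => pad_shift i j he hM)).
Qed.

Lemma alt_num_bump a z ex i :
  alt_num a z (fun j => (ex j + (j == i))%N) =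
  \sum_(s : 'S_k) (-1) ^+ odd_perm s * cross a z s * weight z ex s * Wt z (s i).
Proof.
apply: eq_bigr => s _; rewrite -!mulrA; congr (_ * (_ * _)).
rewrite /weight; under eq_bigr => j _ do rewrite exprD.
rewrite big_split /=; congr (_ * _).
rewrite (bigD1 i) //= eqxx expr1 big1 ?mulr1 // => j /negPf ->.
by rewrite expr0.
Qed.

Lemma sum_alt_quot_bump a z ex :
  \sum_i alt_quot a z (fun j => (ex j + (j == i))%N)
  = (\sum_j Wt z j) * alt_quot a z ex.
Proof.
apply: (mulfI (sym_den_neq0 z)); rewrite mulr_sumr mulrCA -alt_num_factor.
under eq_bigr => i _ do rewrite -alt_num_factor alt_num_bump.
rewrite exchange_big /= /alt_num mulr_sumr; apply: eq_bigr => s _.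
rewrite -mulr_sumr mulrC; congr (_ * _).
by rewrite [RHS](reindex_inj (@perm_inj _ s)).
Qed.

Lemma sym_shift_sum a e z n : (forall j, z j != 1) -> absz e = 1%N ->
  \sum_i sym a e z (shift n i e) = (k%:R - \sum_j z j) * sym a e z n.
Proof.
move=> hz he; rewrite sym_common_pad //.
under eq_bigr => i _ do rewrite sym_shift_common_pad //.
rewrite -mulr_suml -horner_sum sum_alt_quot_bump hornerM horner_sum mulrA.
congr (_ * _ / _); under eq_bigr => j _ do rewrite Wt0.
by rewrite sumrB sumr_const card_ord.
Qed.

End SymmetrizedValue.

Section Boundary.
Variable R : numClosedFieldType.
Variable k : nat.
Implicit Types (a : R) (e : int) (z : 'I_k -> R) (n : 'I_k -> int) (ex : 'I_k -> nat).

Lemma tperm_pair_order (i j : 'I_k) (p : 'I_k * 'I_k) : val j = (val i).+1 ->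
  ((p.2 < p.1)%N && (p != (j, i))) =
  ((tperm i j p.2 < tperm i j p.1)%N && (p != (i, j))).
Proof.
have neq (x y : 'I_k) : x <> y -> nat_of_ord x <> nat_of_ord y.
  by move=> h hv; apply: h; apply: val_inj.
case: p => a b /= hij; rewrite !xpair_eqE -!val_eqE /=.
case: (tpermP i j a) => [->|->|/neq ha1 /neq ha2];
case: (tpermP i j b) => [->|->|/neq hb1 /neq hb2]; rewrite ?eqxx /=; lia.
Qed.

Lemma cross_tperm a z s (i j : 'I_k) : val j = (val i).+1 ->
  cross a z (tperm i j * s)%g * (Zt z (s j) - a *: Zt z (s i)) =
  cross a z s * (Zt z (s i) - a *: Zt z (s j)).
Proof.
move=> hij; have hij' : nat_of_ord j = (nat_of_ord i).+1 by [].
rewrite /cross !pair_big_dep /=.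
under eq_bigr => p _ do rewrite !permM.
have finj : injective (fun p : 'I_k * 'I_k => (tperm i j p.1, tperm i j p.2)).
  by move=> [x1 x2] [y1 y2] /= [/perm_inj -> /perm_inj ->].
rewrite (reindex_inj finj) /=.
under eq_bigr => p _ do rewrite !tpermK.
rewrite (bigD1 (i, j)) /=; last by rewrite tpermL tpermR; lia.
rewrite [in RHS](bigD1 (j, i)) /=; last by lia.
under eq_bigl => p do rewrite -tperm_pair_order //.
set P := \prod_(p | _) _; ring.
Qed.

(* If the exponents at i and j = i + 1 agree, the s-terms multiplied by
   x_(s i) - a x_(s j) cancel in pairs s, (i j) s. *)
Lemma alt_sum_tperm_zero a z ex (i j : 'I_k) : val j = (val i).+1 -> ex i = ex j ->
  \sum_(s : 'S_k) (-1) ^+ odd_perm s * cross a z s * weight z ex s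
                   * (Zt z (s i) - a *: Zt z (s j)) = 0.
Proof.
move=> hij hex; have hij' : nat_of_ord j = (nat_of_ord i).+1 by [].
have hneq : i != j by apply/eqP => e; move: hij'; rewrite e; lia.
set T := fun s : 'S_k => (-1) ^+ odd_perm s * cross a z s * weight z ex s
                         * (Zt z (s i) - a *: Zt z (s j)).
have weightT s : weight z ex (tperm i j * s)%g = weight z ex s.
  rewrite /weight (reindex_inj (@perm_inj _ (tperm i j))) /=.
  apply: eq_bigr => l _; rewrite permM tpermK; congr (_ ^+ _).
  by case: (tpermP i j l) => [->|->|].
have hT s : T (tperm i j * s)%g = - T s.
  rewrite /T odd_mul_tperm hneq /= weightT !permM tpermL tpermR.
  rewrite -mulrA [weight _ _ _ * _]mulrC mulrA -[X in X * _ = _]mulrA cross_tperm //.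
  case: (odd_perm s); rewrite /= ?expr0 ?expr1; ring.
have : \sum_s T s = - \sum_s T s.
  rewrite [in LHS](reindex_inj (mulgI (tperm i j))) /= -sumrN.
  by apply: eq_bigr => s _; rewrite hT.
move/eqP; rewrite -subr_eq0 opprK -mulr2n -mulr_natr mulf_eq0 => /orP [/eqP //|].
by rewrite -polyC_natr polyC_eq0 pnatr_eq0.
Qed.

Lemma sym_boundary a e z n (i j : 'I_k) : (forall l, z l != 1) -> absz e = 1%N ->
  val j = (val i).+1 -> n i = n j ->
  sym a e z (shift n i e) - a * sym a e z (shift n j e) - (1 - a) * sym a e z n = 0.
Proof.
move=> hz he hij hn; rewrite !sym_shift_common_pad // sym_common_pad //.
set ex := pad e n (mexp n).+1.
have hex : ex i = ex j by rewrite /ex /pad hn.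
suff -> : alt_quot a z (fun l => (ex l + (l == i))%N) =
   a%:P * alt_quot a z (fun l => (ex l + (l == j))%N) + (1 - a)%:P * alt_quot a z ex.
  by rewrite hornerD !hornerM !hornerC; field; rewrite wpow_neq0.
apply: (mulfI (sym_den_neq0 z)).
rewrite mulrDr mulrCA [_ * (_ * alt_quot _ _ ex)]mulrCA -!alt_num_factor.
apply/eqP; rewrite -subr_eq0 !alt_num_bump /alt_num !mulr_sumr -big_split -sumrB.
rewrite -[X in _ == X]oppr0 -[X in _ == - X](alt_sum_tperm_zero a z hij hex) -sumrN.
apply/eqP; apply: eq_bigr => s _.
rewrite /Wt -!mul_polyC rmorphB rmorph1 /=.
set V := cross a z s; set E := weight z ex s; set x := Zt z (s i); set y := Zt z (s j).
set c := a%:P; set sg := (-1) ^+ odd_perm s.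
ring.
Qed.

End Boundary.

Section ClusterTelescope.
Variable R : comNzRingType.
Variable k : nat.
Variable v : nat -> int.
Hypothesis v_decr : forall l1 l2, (l1 <= l2)%N -> (l2 < k)%N -> v l2 <= v l1.
Variable a : R.
Variable phi : nat -> R.

Definition cluster_size l := #|[pred r : 'I_k | v r == v l]|.
Definition rank_upto l := #|[pred r : 'I_k | (r <= l)%N && (v r == v l)]|.
Definition rank_from l := #|[pred r : 'I_k | (l <= r)%N && (v r == v l)]|.
Definition last_in_cluster l := ~~ (l.+1 < k)%N || (v l.+1 != v l).
Definition first_in_cluster l := (l == 0%N) || (v l.-1 != v l).

Lemma rank_uptoS l : (l.+1 < k)%N -> v l = v l.+1 -> rank_upto l.+1 = (rank_upto l).+1.
Proof.
move=> hl hv; rewrite /rank_upto (cardD1 (Ordinal hl)) !inE /= ltnSn eqxx /= add1n.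
congr S; apply: eq_card => r; rewrite !inE -val_eqE /= hv.
by case: (ltngtP r l.+1) => //= h; lia.
Qed.

Lemma rank_upto_first l : (l < k)%N -> (l = 0%N \/ v l.-1 != v l) -> rank_upto l = 1%N.
Proof.
move=> hl h; rewrite /rank_upto -(card1 (Ordinal hl)); apply: eq_card => r.
rewrite !inE -val_eqE /=.
case: (ltngtP r l) => //= hrl; last by rewrite hrl eqxx.
case: h => [e|h]; first by move: hrl; rewrite e.
apply/negbTE; rewrite eq_sym.
have h1 : v l <= v l.-1 by apply: v_decr; lia.
have h2 : v l.-1 <= v r by apply: v_decr; lia.
move: h; apply: contra => /eqP e; apply/eqP; apply: le_anti.
by rewrite h1 /= e h2.
Qed.

Lemma rank_upto_last l : (l < k)%N -> last_in_cluster l -> rank_upto l = cluster_size l.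
Proof.
move=> hl hla; rewrite /rank_upto /cluster_size; apply: eq_card => r; rewrite !inE.
case: (leqP r l) => //= hrl; apply/esym/negbTE.
move: hla; rewrite /last_in_cluster; case: ltnP => /= h1; last by have := ltn_ord r; lia.
move=> hne; have h2 : v r <= v l.+1 by apply: v_decr.
have h3 : v l.+1 <= v l by apply: v_decr.
apply/eqP => e; move/eqP: hne; apply; apply: le_anti; by rewrite h3 /= -e h2.
Qed.

Lemma rank_fromS l : (l.+1 < k)%N -> v l = v l.+1 -> rank_from l = (rank_from l.+1).+1.
Proof.
move=> hl hv; have hl' : (l < k)%N by lia.
rewrite /rank_from (cardD1 (Ordinal hl')) !inE /= leqnn eqxx /= add1n; congr S.
apply: eq_card => r; rewrite !inE -val_eqE /= -hv.
by case: (ltngtP l r) => //= h; lia.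
Qed.

Lemma rank_from_last l : (l < k)%N -> (~~ (l.+1 < k)%N \/ v l.+1 != v l) ->
  rank_from l = 1%N.
Proof.
move=> hl h; rewrite /rank_from -(card1 (Ordinal hl)); apply: eq_card => r.
rewrite !inE -val_eqE /=.
case: (ltngtP l r) => //= hrl; last by rewrite hrl eqxx.
case: h => [h|h]; first by have := ltn_ord r; lia.
apply/negbTE.
have h1 : v l.+1 <= v l by apply: v_decr; have := ltn_ord r; lia.
have h2 : v r <= v l.+1 by apply: v_decr; [lia | exact: ltn_ord].
move: h; apply: contra => /eqP e; apply/eqP; apply: le_anti.
by rewrite h1 /= -e h2.
Qed.

Lemma rank_from_first l : (l < k)%N -> first_in_cluster l -> rank_from l = cluster_size l.
Proof.
move=> hl hfi; rewrite /rank_from /cluster_size; apply: eq_card => r; rewrite !inE.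
case: (leqP l r) => //= hrl; apply/esym/negbTE.
move: hfi; rewrite /first_in_cluster; case: l hl hrl => [|l] //= hl hrl hne.
have h2 : v l <= v r by apply: v_decr; lia.
have h3 : v l.+1 <= v l by apply: v_decr; lia.
apply/eqP => e; move/eqP: hne; apply; apply: le_anti; by rewrite h3 /= -e h2.
Qed.

Lemma sum_nat_last_split (F : nat -> R) : (0 < k)%N ->
  \sum_(0 <= l < k) F l = \sum_(0 <= l < k.-1) F l + F k.-1.
Proof. by case: k => // k' _; rewrite big_nat_recr. Qed.

Lemma sum_nat_first_split (F : nat -> R) : (0 < k)%N ->
  \sum_(0 <= l < k) F l = F 0%N + \sum_(0 <= l < k.-1) F l.+1.
Proof. by case: k => // k' _; rewrite big_nat_recl. Qed.

(* If phi_l = a phi_(l+1) inside clusters, then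
   (1 - a) phi_l = T_l - T_(l-1) [when l-1 is in the cluster of l]
   with T_l = (1 - a ^+ rank_upto l) phi_l; the sum over clusters telescopes. *)
Section LastTelescope.
Hypothesis phi_last : forall l, (l.+1 < k)%N -> v l = v l.+1 -> phi l = a * phi l.+1.
Let T l := (1 - a ^+ rank_upto l) * phi l.

Lemma telescope_last_step l : (l < k)%N ->
  (1 - a) * phi l = T l - (if (0 < l)%N && (v l.-1 == v l) then T l.-1 else 0).
Proof.
move=> hl; case: l hl => [|m] hl /=.
  by rewrite subr0 /T (rank_upto_first hl (or_introl erefl)) expr1.
case: eqP => hv.
  by rewrite /T (rank_uptoS hl hv) (phi_last hl hv) exprS; ring.
have hv' : v m.+1.-1 != v m.+1 by apply/eqP.
by rewrite subr0 /T (rank_upto_first hl (or_intror hv')) expr1.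
Qed.

Lemma telescope_last :
  \sum_(0 <= l < k | last_in_cluster l) (1 - a ^+ cluster_size l) * phi l =
  (1 - a) * \sum_(0 <= l < k) phi l.
Proof.
rewrite mulr_sumr (eq_big_nat _ _ (fun l hl => telescope_last_step (proj2 (andP hl)))).
rewrite sumrB; case: (posnP k) => hk0; first by rewrite hk0 !big_geq // subrr.
rewrite big_mkcond /= [in LHS]sum_nat_last_split // [in X in _ = X - _]sum_nat_last_split //.
rewrite [in X in _ = _ - X]sum_nat_first_split //= add0r.
have hk' : (k.-1 < k)%N by rewrite prednK.
have hlk : last_in_cluster k.-1 by rewrite /last_in_cluster prednK ?ltnn.
rewrite hlk -(rank_upto_last hk' hlk) -/(T k.-1) addrAC -sumrB.
congr (_ + _); apply: eq_big_nat => i /andP [_ hi].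
have hi1 : (i.+1 < k)%N by lia.
rewrite /T /last_in_cluster hi1 /= eq_sym.
case: (boolP (v i == v i.+1)) => hv /=; first by rewrite subrr.
rewrite (rank_upto_last (ltnW hi1)) ?subr0 //.
by rewrite /last_in_cluster hi1 eq_sym.
Qed.
End LastTelescope.

Section FirstTelescope.
Hypothesis phi_first : forall l, (l.+1 < k)%N -> v l = v l.+1 -> phi l.+1 = a * phi l.
Let T l := (1 - a ^+ rank_from l) * phi l.

Lemma telescope_first_step l : (l < k)%N ->
  (1 - a) * phi l = T l - (if (l.+1 < k)%N && (v l == v l.+1) then T l.+1 else 0).
Proof.
move=> hl; case: (ltnP l.+1 k) => hl1 /=; last first.
  by rewrite subr0 /T (rank_from_last hl (or_introl _)) ?expr1 // -leqNgt.
case: eqP => hv.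
  by rewrite /T (rank_fromS hl1 hv) (phi_first hl1 hv) exprS; ring.
have hv' : v l.+1 != v l by apply/eqP => e; apply: hv.
by rewrite subr0 /T (rank_from_last hl (or_intror hv')) expr1.
Qed.

Lemma telescope_first :
  \sum_(0 <= l < k | first_in_cluster l) (1 - a ^+ cluster_size l) * phi l =
  (1 - a) * \sum_(0 <= l < k) phi l.
Proof.
rewrite mulr_sumr (eq_big_nat _ _ (fun l hl => telescope_first_step (proj2 (andP hl)))).
rewrite sumrB; case: (posnP k) => hk0; first by rewrite hk0 !big_geq // subrr.
rewrite big_mkcond /= [in LHS]sum_nat_first_split // [in X in _ = X - _]sum_nat_first_split //.
rewrite [in X in _ = _ - X]sum_nat_last_split //= prednK // ltnn /= addr0.
have hf0 : first_in_cluster 0 by [].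
rewrite -(rank_from_first hk0 hf0) -/(T 0) -addrA -sumrB.
congr (_ + _); apply: eq_big_nat => i /andP [_ hi].
have hi1 : (i.+1 < k)%N by lia.
rewrite hi1 /= /first_in_cluster /=.
case: (boolP (v i == v i.+1)) => hv /=; first by rewrite subrr.
have hfi : first_in_cluster i.+1 by rewrite /first_in_cluster /= hv.
by rewrite /T (rank_from_first hi1 hfi) subr0.
Qed.
End FirstTelescope.

End ClusterTelescope.

Section WeylTelescope.
Variable R : numClosedFieldType.
Variable k : nat.
Implicit Types (n : 'I_k -> int).

Lemma nat_valE n (i : 'I_k) : nat_val n i = n i.
Proof. by rewrite /nat_val valK. Qed.

Definition ext (F : 'I_k -> R) (l : nat) : R := odflt 0 (omap F (insub l)).

Lemma extE F (j : 'I_k) : ext F j = F j.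
Proof. by rewrite /ext valK. Qed.

Lemma sum_ext F : \sum_(j : 'I_k) F j = \sum_(0 <= l < k) ext F l.
Proof. by rewrite big_mkord; apply: eq_bigr => j _; rewrite extE. Qed.

Lemma weyl_nat_val n : weyl n ->
  forall l1 l2, (l1 <= l2)%N -> (l2 < k)%N -> nat_val n l2 <= nat_val n l1.
Proof.
move=> hw l1 l2 h12 h2; have h1 : (l1 < k)%N by lia.
have -> : nat_val n l2 = n (Ordinal h2) by rewrite -nat_valE.
have -> : nat_val n l1 = n (Ordinal h1) by rewrite -nat_valE.
exact: hw.
Qed.

Lemma csize_cluster_size n (j : 'I_k) : csize_at n j = cluster_size k (nat_val n) j.
Proof. by apply: eq_card => i; rewrite !inE !nat_valE. Qed.

Lemma weyl_telescope_last n a (F : 'I_k -> R) : weyl n ->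
  (forall i j : 'I_k, val j = (val i).+1 -> n i = n j -> F i = a * F j) ->
  \sum_(j | is_last n j) (1 - a ^+ csize_at n j) * F j = (1 - a) * \sum_j F j.
Proof.
move=> hw hb; rewrite sum_ext -(telescope_last (weyl_nat_val hw)).
- rewrite big_mkord; apply: eq_big => [j|j _].
    by rewrite /is_last /last_in_cluster nat_valE.
  by rewrite extE csize_cluster_size.
- move=> l hl hv; have hl0 : (l < k)%N by lia.
  rewrite -[l]/(nat_of_ord (Ordinal hl0)) -[l.+1]/(nat_of_ord (Ordinal hl)) !extE.
  by apply: hb => //; rewrite -!nat_valE.
Qed.

Lemma weyl_telescope_first n a (F : 'I_k -> R) : weyl n ->
  (forall i j : 'I_k, val j = (val i).+1 -> n i = n j -> F j = a * F i) ->
  \sum_(j | is_first n j) (1 - a ^+ csize_at n j) * F j = (1 - a) * \sum_j F j.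
Proof.
move=> hw hb; rewrite sum_ext -(telescope_first (weyl_nat_val hw)).
- rewrite big_mkord; apply: eq_big => [j|j _].
    by rewrite /is_first /first_in_cluster nat_valE.
  by rewrite extE csize_cluster_size.
- move=> l hl hv; have hl0 : (l < k)%N by lia.
  rewrite -[l]/(nat_of_ord (Ordinal hl0)) -[l.+1]/(nat_of_ord (Ordinal hl)) !extE.
  by apply: hb => //; rewrite -!nat_valE.
Qed.

End WeylTelescope.

Section ConjugatingFactor.
Variable R : numClosedFieldType.
Variable k : nat.
Variable q : R.
Implicit Types (n : 'I_k -> int).

Definition mult n (c : int) : nat := #|[pred i : 'I_k | n i == c]|.
Definition last_of_value n (l : 'I_k) : bool :=
  [forall r : 'I_k, (l < r)%N ==> (n r != n l)].

Definition qfact_mult n : R := \prod_(l | last_of_value n l) qfact q (mult n (n l)).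

Lemma qfact0 : qfact q 0 = 1.
Proof. by rewrite /qfact big_geq. Qed.

Lemma qfactS c : qfact q c.+1 = qfact q c * ((1 - q ^+ c.+1) / (1 - q)).
Proof. by rewrite /qfact big_nat_recr. Qed.

Lemma qfact_mult_seq n (V : seq int) : uniq V -> (forall i, n i \in V) ->
  qfact_mult n = \prod_(c <- V) qfact q (mult n c).
Proof.
move=> uV hV.
rewrite (bigID (fun c => c \in codom n)) /= [X in _ * X]big1 ?mulr1; last first.
  move=> c hc; have -> : mult n c = 0%N.
    apply: eq_card0 => i.
    rewrite !inE; apply/negbTE; apply: contra hc => /eqP <-; exact: codom_f.
  exact: qfact0.
rewrite -big_filter /qfact_mult.
have -> : \prod_(l | last_of_value n l) qfact q (mult n (n l)) =
    \prod_(c <- [seq n l | l <- enum (last_of_value n)]) qfact q (mult n c).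
  by rewrite big_map big_enum.
apply: perm_big; apply: uniq_perm.
- rewrite map_inj_in_uniq ?enum_uniq // => l1 l2.
  rewrite !mem_enum => h1 h2 e.
  case: (ltngtP l1 l2) => h; last exact: val_inj.
  + by move/forallP/(_ l2): h1; rewrite h e eqxx.
  + by move/forallP/(_ l1): h2; rewrite h e eqxx.
- by rewrite filter_uniq.
- move=> c; rewrite mem_filter; apply/mapP/andP.
  + move=> [l hl ->]; split; [exact: codom_f | exact: hV].
  + move=> [/codomP [i ->] _].
    case: (@arg_maxnP _ i (fun r => n r == n i) val (eqxx _)) => l' /eqP hl' hmax.
    exists l'; last by rewrite hl'.
    rewrite mem_enum; apply/forallP => r; apply/implyP => hr.
    apply/negP => /eqP e; have := hmax r; rewrite e hl' eqxx => /(_ isT).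
    by move: hr; rewrite /=; lia.
Qed.

(* Raising n_j by one moves one unit of multiplicity from n_j to n_j + 1. *)
Lemma mult_shift n (j : 'I_k) (c : int) :
  (mult (shift n j 1) c + (n j == c) = mult n c + ((n j + 1)%R == c))%N.
Proof.
rewrite /mult (cardD1 j) [in RHS](cardD1 j) !inE /shift eqxx.
set Y := #|[predD1 [pred i | n i == c] & j]|.
have -> : #|[predD1 [pred i | (if i == j then (n i + 1)%R else n i) == c] & j]| = Y.
  by apply: eq_card => i; rewrite !inE; case: eqP.
lia.
Qed.

Lemma prod_seq2 (F : int -> R) (V : seq int) c1 c2 :
  uniq V -> c1 \in V -> c2 \in V -> c2 != c1 ->
  \prod_(c <- V) F c = F c1 * F c2 * \prod_(c <- V | (c != c1) && (c != c2)) F c.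
Proof.
move=> uV h1 h2 h12.
rewrite (bigD1_seq c1 h1 uV) /= -big_filter.
have W2 : c2 \in [seq i <- V | i != c1] by rewrite mem_filter h12.
have uW : uniq [seq i <- V | i != c1] by rewrite filter_uniq.
rewrite (bigD1_seq c2 W2 uW) /= big_filter_cond /= mulrA.
by congr (_ * _); apply: eq_bigl => c; rewrite andbC.
Qed.

(* Only the q-factorials of the values n_j and n_j + 1 change. *)
Lemma qfact_mult_shift n (j : 'I_k) :
  qfact_mult (shift n j 1) * ((1 - q ^+ mult n (n j)) / (1 - q)) =
  qfact_mult n * ((1 - q ^+ (mult n (n j + 1)).+1) / (1 - q)).
Proof.
set m := shift n j 1; set V := undup (codom n ++ codom m).
have uV : uniq V by apply: undup_uniq.
have Vn i : n i \in V by rewrite mem_undup mem_cat codom_f.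
have Vm i : m i \in V by rewrite mem_undup mem_cat codom_f orbT.
rewrite (qfact_mult_seq uV Vm) (qfact_mult_seq uV Vn).
set c1 := n j; set c2 := n j + 1.
have c12 : c2 != c1 by rewrite /c2 /c1 -subr_eq0 addrAC subrr add0r oner_eq0.
have Vc2 : c2 \in V by have := Vm j; rewrite /m /shift eqxx.
rewrite !(prod_seq2 _ uV (Vn j) Vc2 c12).
have -> : \prod_(i <- V | (i != c1) && (i != c2)) qfact q (mult m i) =
          \prod_(i <- V | (i != c1) && (i != c2)) qfact q (mult n i).
  apply: eq_bigr => c /andP [h1 h2].
  have := mult_shift n j c; rewrite -/m -/c1 -/c2 eq_sym (negbTE h1) eq_sym (negbTE h2).
  by rewrite !addn0 => ->.
have e1 := mult_shift n j c1; have e2 := mult_shift n j c2.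
rewrite -/m -/c1 -/c2 eqxx (negbTE c12) eq_sym (negbTE c12) /= in e1 e2.
have -> : mult n c1 = (mult m c1).+1 by lia.
have -> : mult m c2 = (mult n c2).+1 by lia.
rewrite !qfactS; set P := \prod_(i <- V | _) _; ring.
Qed.

Lemma last_of_valueE n (l : 'I_k) : weyl n -> is_last n l = last_of_value n l.
Proof.
move=> hw; rewrite /is_last /last_of_value.
case: (ltnP l.+1 k) => h /=; last first.
  by apply/esym/forallP => r; apply/implyP => hr; have := ltn_ord r; lia.
have -> : nat_val n l.+1 = n (Ordinal h) by rewrite -nat_valE.
apply/idP/idP; last by move/forallP/(_ (Ordinal h)); rewrite /= ltnSn.
move=> hne; apply/forallP => r; apply/implyP => hr.
have h1 : n r <= n (Ordinal h) by apply: hw.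
have h2 : n (Ordinal h) <= n l by apply: hw; rewrite /= leqnSn.
by apply: contra hne => /eqP e; rewrite eq_le h2 /= -e h1.
Qed.

Lemma Cq_qfact_mult n : weyl n ->
  Cq q n = (-1) ^+ k * (q ^+ ((k * (k - 1)) %/ 2))^-1 * qfact_mult n.
Proof.
move=> hw; rewrite /Cq /qfact_mult; congr (_ * _).
rewrite (eq_bigl _ _ (fun l => last_of_valueE l hw)); apply: eq_bigr => l _.
by rewrite /csize_at nat_valE.
Qed.

Lemma first_pred n (j : 'I_k) : weyl n -> is_first n j -> (0 < j)%N ->
  exists p : 'I_k,
    [/\ nat_of_ord j = (nat_of_ord p).+1, nat_val n j.-1 = n p & n j + 1 <= n p].
Proof.
move=> hw hf hj; have hp : (j.-1 < k)%N by have := ltn_ord j; lia.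
have hnp : nat_val n j.-1 = n (Ordinal hp) by rewrite -nat_valE.
exists (Ordinal hp); split => //=; first by lia.
move: hf; rewrite /is_first (_ : (val j == 0%N) = false) /=; last by lia.
rewrite hnp; have : n j <= n (Ordinal hp) by apply: hw => /=; lia.
by rewrite le_eqVlt eq_sym => /orP [-> //|] h _; lia.
Qed.

Lemma weyl_shift n (j : 'I_k) : weyl n -> is_first n j -> weyl (shift n j 1).
Proof.
move=> hw hf i1 i2 h12; rewrite /shift.
case: (eqVneq i1 j) => [e1|h1]; case: (eqVneq i2 j) => [e2|h2].
- by rewrite e1 e2 lexx.
- have := hw _ _ h12; rewrite e1; lia.
- rewrite e2.
  have hlt : (i1 < j)%N.
    have hne : nat_of_ord i1 <> nat_of_ord j by move=> e; move/eqP: h1; apply; apply: val_inj.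
    have : (i1 <= j)%N by rewrite -e2.
    lia.
  have [p [hpj hpv hp]] := first_pred hw hf (leq_ltn_trans (leq0n _) hlt).
  have : n p <= n i1 by apply: hw; lia.
  lia.
- exact: hw.
Qed.

Lemma fwd_coefE n (j : 'I_k) : weyl n -> is_first n j ->
  fwd_coef q n j = 1 - q ^+ (mult n (n j + 1)).+1.
Proof.
move=> hw hf; rewrite /fwd_coef.
case: (posnP j) => hj /=.
  have -> : mult n (n j + 1) = 0%N.
    apply: eq_card0 => i; rewrite !inE; apply/negbTE/eqP => e.
    have : n i <= n j by apply: hw; rewrite hj.
    lia.
  by rewrite expr1.
have [p [hpj hpv hp]] := first_pred hw hf hj.
rewrite hpv; case: eqP => he.
  rewrite /csize_at hpv; congr (1 - q ^+ _.+1); apply: eq_card => i.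
  by rewrite !inE; congr (_ == _); lia.
have -> : mult n (n j + 1) = 0%N.
  apply: eq_card0 => i; rewrite !inE; apply/negbTE/eqP => e.
  case: (leqP i p) => hip.
    have : n p <= n i by apply: hw.
    lia.
  have : n i <= n j by apply: hw; lia.
  lia.
by rewrite expr1.
Qed.

(* For 0 < q < 1 all q-integers, hence C_q, are nonzero. *)
Hypothesis q_gt0 : 0 < q.
Hypothesis q_lt1 : q < 1.

Lemma one_sub_qpow_neq0 (c : nat) : 1 - q ^+ c.+1 != 0.
Proof.
rewrite subr_eq0 eq_sym; apply/negP => /eqP e.
have : q ^+ c.+1 < 1 by rewrite exprn_ilt1 ?ltW.
by rewrite e ltxx.
Qed.

Lemma qfact_neq0 c : qfact q c != 0.
Proof.
rewrite /qfact big_seq.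
apply: (big_rec (fun x : R => x != 0)) => [|r x hr hx]; first exact: oner_neq0.
rewrite mem_index_iota in hr; case: r hr => // r _.
by rewrite !mulf_neq0 ?invr_eq0 ?one_sub_qpow_neq0 // -(expr1 q) one_sub_qpow_neq0.
Qed.

Lemma Cq_neq0 n : Cq q n != 0.
Proof.
rewrite /Cq !mulf_neq0 ?signr_eq0 ?invr_eq0 ?expf_neq0 //; first by rewrite gt_eqF.
by apply/prodf_neq0 => l _; apply: qfact_neq0.
Qed.

Lemma Cq_fwd_coef n (j : 'I_k) : weyl n -> is_first n j ->
  Cq q n * fwd_coef q n j = (1 - q ^+ csize_at n j) * Cq q (shift n j 1).
Proof.
move=> hw hf.
rewrite (Cq_qfact_mult hw) (Cq_qfact_mult (weyl_shift hw hf)) (fwd_coefE hw hf).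
rewrite /csize_at nat_valE.
have hq : 1 - q != 0 by rewrite -(expr1 q) one_sub_qpow_neq0.
have e : qfact_mult (shift n j 1) * (1 - q ^+ mult n (n j))
          = qfact_mult n * (1 - q ^+ (mult n (n j + 1)).+1).
  move: (qfact_mult_shift n j); rewrite !mulrA => /(congr1 (fun x => x * (1 - q))).
  by rewrite -!mulrA mulVf // !mulr1.
by rewrite -[_ * qfact_mult n * _]mulrA -e /mult; ring.
Qed.

End ConjugatingFactor.

Section Eigenrelations.
Variable R : numClosedFieldType.
Variable k : nat.
Variable q : R.
Hypothesis q_gt0 : 0 < q.
Hypothesis q_lt1 : q < 1.
Variable z : 'I_k -> R.
Hypothesis z_neq1 : forall j, z j != 1.
Let sz := \sum_(j : 'I_k) z j.

Lemma sym_laplacian a e n : absz e = 1%N ->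
  \sum_(i : 'I_k) (sym a e z (shift n i e) - sym a e z n) = - sz * sym a e z n.
Proof.
move=> he; rewrite sumrB sym_shift_sum // sumr_const card_ord -mulr_natl.
by rewrite /sz; ring.
Qed.

Lemma Psi_l_free n :
  (1 - q) * \sum_(i : 'I_k) nabla_bwd i (Psi_l q z) n = (q - 1) * sz * Psi_l q z n.
Proof. by rewrite /nabla_bwd /Psi_l (sym_laplacian _ _ (erefl : absz (-1) = 1%N)); ring. Qed.

Lemma Psi_cfwd_free n :
  (1 - q) * \sum_(i : 'I_k) nabla_fwd i (Psi_cfwd q z) n = (q - 1) * sz * Psi_cfwd q z n.
Proof. by rewrite /nabla_fwd /Psi_cfwd (sym_laplacian _ _ (erefl : absz 1 = 1%N)); ring. Qed.

Lemma Psi_l_boundary n (i j : 'I_k) : val j = (val i).+1 -> n i = n j ->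
  nabla_bwd i (Psi_l q z) n - q * nabla_bwd j (Psi_l q z) n = 0.
Proof.
move=> hij hn; have := sym_boundary q z_neq1 (erefl : absz (-1) = 1%N) hij hn.
by rewrite /nabla_bwd /Psi_l => <-; ring.
Qed.

Lemma Psi_cfwd_boundary n (i j : 'I_k) : val j = (val i).+1 -> n i = n j ->
  q * nabla_fwd i (Psi_cfwd q z) n - nabla_fwd j (Psi_cfwd q z) n = 0.
Proof.
move=> hij hn; have := sym_boundary q^-1 z_neq1 (erefl : absz 1 = 1%N) hij hn.
rewrite /nabla_fwd /Psi_cfwd => h; rewrite -[RHS](mulr0 q) -h.
by field; rewrite gt_eqF.
Qed.

(* On W^k the boundary relation telescopes each cluster sum of H^bwd. *)
Lemma Hbwd_Psi_l n : weyl n -> Hbwd q (Psi_l q z) n = (q - 1) * sz * Psi_l q z n.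
Proof.
move=> hw; rewrite -Psi_l_free /Hbwd.
rewrite -(weyl_telescope_last (a := q) (F := fun j => nabla_bwd j (Psi_l q z) n) hw) //.
by move=> i j hij hn; apply/eqP; rewrite -subr_eq0 Psi_l_boundary.
Qed.

(* After conjugation by C_q, the H^fwd coefficients become 1 - q^(c_j), and the
   cluster sum telescopes as for H^bwd. *)
Lemma Hcfwd_Psi_cfwd n : weyl n ->
  Hcfwd q (Psi_cfwd q z) n = (q - 1) * sz * Psi_cfwd q z n.
Proof.
move=> hw; rewrite -Psi_cfwd_free /Hcfwd /Hfwd mulr_sumr.
rewrite -(weyl_telescope_first (a := q) (F := fun j => nabla_fwd j (Psi_cfwd q z) n) hw);
  last by move=> i j hij hn; apply/eqP; rewrite -subr_eq0 -oppr_eq0 opprB Psi_cfwd_boundary.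
apply: eq_bigr => j hf.
have hC := Cq_neq0 q_gt0 q_lt1 n; have hCs := Cq_neq0 q_gt0 q_lt1 (shift n j 1).
have hc : fwd_coef q n j = (1 - q ^+ csize_at n j) * Cq q (shift n j 1) / Cq q n.
  by rewrite -(Cq_fwd_coef q_gt0 q_lt1 hw hf); field.
by rewrite /nabla_fwd hc; field; rewrite hC hCs.
Qed.

Lemma Hfwd_Psi_r n : weyl n -> Hfwd q (Psi_r q z) n = (q - 1) * sz * Psi_r q z n.
Proof.
move=> hw; have hC := Cq_neq0 q_gt0 q_lt1 n.
have -> : Hfwd q (Psi_r q z) n = Hcfwd q (Psi_cfwd q z) n / Cq q n.
  by rewrite /Hcfwd mulrC mulrA mulVf // mul1r.
by rewrite Hcfwd_Psi_cfwd // /Psi_r mulrA.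
Qed.

End Eigenrelations.

Unset Implicit Arguments.
Set Strict Implicit.

Theorem proposition2p10 (R : numClosedFieldType) (k : nat) (q : R)
    (hq0 : 0 < q) (hq1 : q < 1) (z : 'I_k -> R) (hz : forall j, z j != 1) :
  let sz := \sum_(j : 'I_k) z j in
  [/\ (forall n : 'I_k -> int,
         (1 - q) * \sum_(i : 'I_k) nabla_bwd i (Psi_l q z) n = (q - 1) * sz * Psi_l q z n),
      (forall (n : 'I_k -> int) (i j : 'I_k), val j = (val i).+1 -> n i = n j ->
         nabla_bwd i (Psi_l q z) n - q * nabla_bwd j (Psi_l q z) n = 0)
    & (forall n : 'I_k -> int, weyl n ->
         Hbwd q (Psi_l q z) n = (q - 1) * sz * Psi_l q z n)]
  /\
  [/\ (forall n : 'I_k -> int,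
         (1 - q) * \sum_(i : 'I_k) nabla_fwd i (Psi_cfwd q z) n
           = (q - 1) * sz * Psi_cfwd q z n),
      (forall (n : 'I_k -> int) (i j : 'I_k), val j = (val i).+1 -> n i = n j ->
         q * nabla_fwd i (Psi_cfwd q z) n - nabla_fwd j (Psi_cfwd q z) n = 0),
      (forall n : 'I_k -> int, weyl n ->
         Hcfwd q (Psi_cfwd q z) n = (q - 1) * sz * Psi_cfwd q z n)
    & (forall n : 'I_k -> int, weyl n ->
         Hfwd q (Psi_r q z) n = (q - 1) * sz * Psi_r q z n)].
Proof.
move=> sz; split; split.
- exact: Psi_l_free.
- exact: Psi_l_boundary.
- exact: Hbwd_Psi_l.
- exact: Psi_cfwd_free.
- exact: Psi_cfwd_boundary.
- exact: Hcfwd_Psi_cfwd.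
- exact: Hfwd_Psi_r.
Qed.
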